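(* Let $X$ be a set; give $2^X$ the product topology and $X$ the discrete topology. Then: (i) $\tau_{pp}$ is the smallest topology on $I(X)$ for which $\mathrm{dom}:I(X)\to 2^X$, $\mathrm{im}:I(X)\to 2^X$ and, for every $x\in X$, $\mathrm{ev}_x:D_x\to X$ (with $D_x$ carrying the subspace topology) are continuous; (ii) $\mathrm{dom}$ and $\mathrm{im}$ are open maps from $(I(X),\tau_{pp})$ to $2^X$; (iii) for any topological space $Y$ and any map $\varphi:Y\to(I(X),\tau_{pp})$, $\varphi$ is continuous if and only if $\mathrm{dom}\circ\varphi$ and $\mathrm{im}\circ\varphi$ are continuous and, for every $x\in X$, $\mathrm{ev}_x\circ\varphi$ is continuous on $\varphi^{-1}(D_x)$; (iv) the set of idempotents $\{1_A: A\subseteq X\}$ is $\tau_{pp}$-compact.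
   Context: $I(X)$ is the set of all bijections $f:A\to B$ with $A,B\subseteq X$ (including the empty map), $\mathrm{dom}(f)=A$, $\mathrm{im}(f)=B$. The maps $\mathrm{dom},\mathrm{im}:I(X)\to 2^X$ send $f$ to $\mathrm{dom}(f)$ and $\mathrm{im}(f)$. $D_x=\{f\in I(X): x\in\mathrm{dom}(f)\}$ and $\mathrm{ev}_x:D_x\to X$, $f\mapsto f(x)$. $1_A$ is the identity on $A$. For $x,y\in X$: $v(x,y)=\{f: x\in\mathrm{dom}(f), f(x)=y\}$, $w_1(x)=\{f: x\notin\mathrm{dom}(f)\}$, $w_2(y)=\{f: y\notin\mathrm{im}(f)\}$; $\tau_{pp}$ is the topology generated by the subbasis of all these sets. *)

From HB Require Import structures.
From mathcomp Require Import all_boot all_order all_algebra.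
From mathcomp Require Import all_classical all_reals all_analysis.
Set Implicit Arguments. Unset Strict Implicit. Unset Printing Implicit Defensive.
Local Open Scope classical_set_scope.

(* I(X): bijections f : A -> B with A, B subsets of X, represented as
   partial injections X -> option X (dom f = {x | f x <> None},
   im f = {y | exists x, f x = Some y}). *)
Record pinj (X : Type) := PInj {
  pfun : X -> option X ;
  pfun_inj : forall x y z, pfun x = Some z -> pfun y = Some z -> x = y }.

HB.instance Definition _ (X : Type) := gen_eqMixin (pinj X).
HB.instance Definition _ (X : Type) := gen_choiceMixin (pinj X).

Section PP.
Variable X : Type.

(* subsets of X as elements of 2^X = {ptws X -> bool} (product topology, bool discrete) *)
Definition dom (f : pinj X) : {ptws X -> bool} := fun x => isSome (pfun f x).
Definition im (f : pinj X) : {ptws X -> bool} :=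
  fun y => `[< exists x, pfun f x = Some y >].

Definition D (x : X) : set (pinj X) := [set f | pfun f x <> None].

(* ev_x : D_x -> X, extended arbitrarily (by x) outside D_x *)
Definition ev (x : X) (f : pinj X) : X := odflt x (pfun f x).

Definition v (x y : X) : set (pinj X) := [set f | pfun f x = Some y].
Definition w1 (x : X) : set (pinj X) := [set f | pfun f x = None].
Definition w2 (y : X) : set (pinj X) := [set f | ~ (exists x, pfun f x = Some y)].

Definition subbase_pp : set (set (pinj X)) :=
  [set S | (exists x y, S = v x y) \/ (exists x, S = w1 x) \/ (exists y, S = w2 y)].

Lemma idA_inj (A : set X) : forall x y z,
  (if `[< A x >] then Some x else None) = Some z ->
  (if `[< A y >] then Some y else None) = Some z -> x = y.
Proof.
move=> x y z; case: `[< A x >] => //; case: `[< A y >] => // [[->] [->]] //.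
Qed.

Definition idA (A : set X) : pinj X :=
  @PInj X (fun x => if `[< A x >] then Some x else None) (@idA_inj A).

End PP.

Definition Ipp (X : Type) := pinj X.
Section PPtop.
Variable X : Type.
HB.instance Definition _ := Choice.on (Ipp X).
HB.instance Definition _ :=
  isSubBaseTopological.Build (Ipp X) (subbase_pp (X:=X)) id.
End PPtop.

Definition is_topology (T : Type) (O : set_system T) : Prop :=
  [/\ O setT,
      (forall A B, O A -> O B -> O (A `&` B)) &
      (forall (I : Type) (F : I -> set T), (forall i, O (F i)) -> O (\bigcup_i F i))].

(* Continuity of dom, im : (I(X), O) -> 2^X (product topology on X -> bool,
   bool discrete) and of ev_x : D_x -> X (D_x with the subspace topology of O,
   X discrete). *)
Definition pp_maps_continuous (X : choiceType) (O : set_system (pinj X)) : Prop :=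
  [/\ (forall V : set {ptws X -> bool}, open V -> O (dom (X:=X) @^-1` V)),
      (forall V : set {ptws X -> bool}, open V -> O (im (X:=X) @^-1` V)) &
      (forall (x : X) (V : set (discrete_topology X)), open V ->
         exists U, O U /\ U `&` D x = D x `&` (ev x @^-1` V))].

From HB Require Import structures.
From mathcomp Require Import all_boot all_order all_algebra.
From mathcomp Require Import all_classical all_reals all_analysis.
From mathcomp Require Import finmap.
Set Implicit Arguments. Unset Strict Implicit.
Local Open Scope classical_set_scope.

(* tau_pp is generated by the subbase v x y, w1 x, w2 y, and each subbasic
   set is the preimage of a subbasic set of 2^X under dom or im, or of a point
   under ev_x inside D_x (D_domE, w1_domE, w2_imE, v_evE).  Hence:
   (i)   dom, im and ev_x are locally constant, hence continuous, and any
         topology for which they are continuous contains the subbase, hence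
         tau_pp (open_Ipp_min, by induction over finite intersections);
   (iii) a map into I(X) is continuous iff preimages of subbasic sets are
         open, which the same descriptions reduce to the three conditions;
   (ii)  each point of an open set has a basic neighbourhood fixing finitely
         many values, holes and missing images; on infinite X any subset
         prescribed at those finitely many points is the domain of a partial
         injection in it (filled through a Hilbert-hotel injection avoiding
         the finitely many constrained images), so dom is open; inversion is
         a homeomorphism exchanging dom and im, so im is open too;
   (iv)  A |-> 1_A is continuous from the compact space 2^X (Tychonoff). *)

Lemma finI_from_ind (T : Type) (B : set (set T)) (P : set T -> Prop) :
  P setT -> (forall S A, B S -> P A -> P (S `&` A)) ->
  forall A, finI_from B id A -> P A.
Proof.
move=> PT PI _ [F FB <-]; have : {subset (F : seq _) <= B} by [].
rewrite (_ : [set` F] = [set` (F : seq _)]) //.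
elim: (F : seq _) => [|S s IH] sB; first by rewrite set_nil bigcap_set0.
have -> : [set` S :: s] = S |` [set` s].
  apply/seteqP; split => x /=; rewrite in_cons.
    by case/orP=> [/eqP|]; [left|right].
  by case=> [->|->]; rewrite ?eqxx ?orbT.
rewrite bigcap_setU1; apply: PI; first exact/set_mem/sB/mem_head.
by apply: IH => R Rs; apply: sB; rewrite in_cons Rs orbT.
Qed.

Lemma preimage_is_topology (T S : topologicalType) (k : T -> S) :
  is_topology [set V : set S | open (k @^-1` V)].
Proof.
split => /=; first exact: openT.
  by move=> A B oA oB; rewrite preimage_setI; exact: openI.
by move=> I F oF; rewrite preimage_bigcup; apply: bigcup_open => i _; exact: oF.
Qed.

Section SubbaseTopology.
Variable X : choiceType.

Lemma open_IppE : @open (Ipp X) =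
  [set \bigcup_(i in F) i | F in subset^~ (finI_from (@subbase_pp X) id)].
Proof. by []. Qed.

Lemma open_subbase (S : set (Ipp X)) : subbase_pp S -> open S.
Proof.
move=> SS; exists [set S]; last by rewrite bigcup_set1.
by move=> _ ->; exact: finI_from1.
Qed.

Lemma open_Ipp_min (O : set_system (pinj X)) : is_topology O ->
  @subbase_pp X `<=` O -> forall U : set (Ipp X), open U -> O U.
Proof.
case=> OT OI OU SO U; rewrite open_IppE => -[F FfinI <-].
rewrite bigcup_set_type; apply: OU => -[A /set_mem /FfinI AfinI] /=.
by apply: (@finI_from_ind _ _ O OT _ _ AfinI) => S A' /SO; exact: OI.
Qed.

Lemma continuous_to_Ipp (Y : topologicalType) (k : Y -> Ipp X) :
  (forall S, @subbase_pp X S -> open (k @^-1` S)) -> continuous k.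
Proof.
move=> kS; apply/continuousP => U.
exact: (open_Ipp_min (preimage_is_topology k) kS).
Qed.

Definition basic (P : seq (X * X)) (As Bs : seq X) : set (pinj X) :=
  [set g | [/\ forall p, p \in P -> pfun g p.1 = Some p.2,
     forall a, a \in As -> pfun g a = None &
     forall b, b \in Bs -> forall x, pfun g x <> Some b]].

Lemma basic_nil : basic [::] [::] [::] = setT.
Proof. by apply/seteqP; split => // g _; split. Qed.

Lemma basic_cons_v x y P As Bs :
  basic ((x, y) :: P) As Bs = v x y `&` basic P As Bs.
Proof.
apply/seteqP; split => g.
  case=> gP gA gB; split; first exact: (gP (x, y) (mem_head _ _)).
  by split => // p pP; apply: gP; rewrite in_cons pP orbT.
by case=> gxy [gP gA gB]; split => // p; rewrite in_cons => /orP[/eqP->|/gP].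
Qed.

Lemma basic_cons_w1 x P As Bs : basic P (x :: As) Bs = w1 x `&` basic P As Bs.
Proof.
apply/seteqP; split => g.
  case=> gP gA gB; split; first exact: (gA x (mem_head _ _)).
  by split => // a aA; apply: gA; rewrite in_cons aA orbT.
by case=> gx [gP gA gB]; split => // a; rewrite in_cons => /orP[/eqP->|/gA].
Qed.

Lemma basic_cons_w2 y P As Bs : basic P As (y :: Bs) = w2 y `&` basic P As Bs.
Proof.
apply/seteqP; split => g.
  case=> gP gA gB; split; first by case=> x; exact: (gB y (mem_head _ _)).
  by split => // b bB; apply: gB; rewrite in_cons bB orbT.
case=> gy [gP gA gB]; split => // b; rewrite in_cons => /orP[/eqP-> x gx|/gB //].
by apply: gy; exists x.
Qed.

Lemma open_basic_nbhs (U : set (Ipp X)) (f : pinj X) : open U -> U f ->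
  exists P As Bs, basic P As Bs f /\ basic P As Bs `<=` U.
Proof.
rewrite open_IppE => -[F FfinI <-] [A FA Af].
suff [P [As [Bs [fB BA]]]] :
    exists P As Bs, basic P As Bs f /\ basic P As Bs `<=` A.
  by exists P, As, Bs; split => // g /BA; exists A.
pose basic_nbhd (A : set (pinj X)) :=
  A f -> exists P As Bs, basic P As Bs f /\ basic P As Bs `<=` A.
apply: (finI_from_ind (P := basic_nbhd) _ _ (FfinI _ FA) Af).
  by exists [::], [::], [::]; rewrite basic_nil.
move=> S A' SS IH [Sf /IH[P [As [Bs [fB BA]]]]].
have [P' [As' [Bs' eqB]]] :
    exists P' As' Bs', basic P' As' Bs' = S `&` basic P As Bs.
  case: SS => [[x [y ->]]|[[x ->]|[y ->]]].
  - by exists ((x, y) :: P), As, Bs; rewrite basic_cons_v.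
  - by exists P, (x :: As), Bs; rewrite basic_cons_w1.
  - by exists P, As, (y :: Bs); rewrite basic_cons_w2.
by exists P', As', Bs'; rewrite eqB; split; [|exact: setISS].
Qed.

End SubbaseTopology.

Lemma continuous_at_locally_constant (T S : topologicalType) (k : T -> S) t
    (V : set T) :
  open V -> V t -> (forall t', V t' -> k t' = k t) -> {for t, continuous k}.
Proof.
move=> oV Vt kV W /= /nbhs_singleton Wkt.
apply: (@filterS _ _ _ V); last exact: open_nbhs_nbhs.
by move=> t' Vt' /=; rewrite kV.
Qed.

Section PowerSet.
Variable X : choiceType.

Lemma continuous_to_ptws (Y : topologicalType) (phi : Y -> {ptws X -> bool}) :
  (forall x, continuous (fun y => phi y x)) -> continuous phi.
Proof.
move=> phiC y.
have [_] := @pointwise_cvgP (discrete_topology X) bool (phi @ y) (phi y) _.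
by apply => x; exact: phiC.
Qed.

Lemma open_coord (x : X) (b : bool) :
  open [set g : {ptws X -> bool} | g x = b].
Proof.
have coordC : continuous (fun g : {ptws X -> bool} => g x).
  move=> g; have [+ _] := @pointwise_cvgP (discrete_topology X) bool (nbhs g) g _.
  by apply; exact: cvg_id.
exact: (proj1 (continuousP _) coordC [set b] (discrete_open _)).
Qed.

Lemma nbhs_cylinder (A : {ptws X -> bool}) (F : seq X) :
  nbhs A [set g | forall x, x \in F -> g x = A x].
Proof.
elim: F => [|x F IH]; first by apply: filterS filterT => g _ x.
have Ax : nbhs A [set g | g x = A x].
  by apply: open_nbhs_nbhs; split; [exact: open_coord|].
apply: filterS (filterI Ax IH) => g [gx gF] y.
by rewrite in_cons => /orP[/eqP->|/gF].
Qed.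

Lemma compact_ptws : compact [set: {ptws X -> bool}].
Proof.
have := @tychonoff X (fun _ => bool) (fun _ => setT) (fun _ => bool_compact).
by rewrite (_ : [set f | forall i, [set: bool] (f i)] = setT) //; apply/seteqP.
Qed.

End PowerSet.

Section StructureMaps.
Variable X : choiceType.

Lemma D_domE (x : X) : D x = @dom X @^-1` [set g | g x = true].
Proof. by apply/seteqP; split => f /=; rewrite /D /dom /=; case: (pfun f x). Qed.

Lemma w1_domE (x : X) : w1 x = @dom X @^-1` [set g | g x = false].
Proof. by apply/seteqP; split => f /=; rewrite /w1 /dom /=; case: (pfun f x). Qed.

Lemma w2_imE (y : X) : w2 y = @im X @^-1` [set g | g y = false].
Proof.
apply/seteqP; split => f /=; rewrite /w2 /im /=; first exact: asboolF.
by move=> /negbT /asboolPn.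
Qed.

Lemma v_evE (x y : X) : v x y = D x `&` ev x @^-1` [set y].
Proof.
apply/seteqP; split => f; rewrite /v /D /ev /=; first by move=> ->.
by case: (pfun f x) => [z [_ /= ->]|[]].
Qed.

(* dom, im and ev_x are locally constant: their relevant values at f are
   fixed on a subbasic neighbourhood of f. *)
Lemma dom_continuous : continuous (@dom X : Ipp X -> {ptws X -> bool}).
Proof.
apply: continuous_to_ptws => x f; case fx: (pfun f x) => [y|].
  apply: (@continuous_at_locally_constant (Ipp X) bool _ f (v x y)) => //.
    by apply: open_subbase; left; exists x, y.
  by move=> g gx; rewrite /dom gx fx.
apply: (@continuous_at_locally_constant (Ipp X) bool _ f (w1 x)) => //.
  by apply: open_subbase; right; left; exists x.
by move=> g gx; rewrite /dom gx fx.
Qed.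

Lemma im_continuous : continuous (@im X : Ipp X -> {ptws X -> bool}).
Proof.
apply: continuous_to_ptws => y f.
have [[x fx]|nfy] := pselect (exists x, pfun f x = Some y).
  apply: (@continuous_at_locally_constant (Ipp X) bool _ f (v x y)) => //.
    by apply: open_subbase; left; exists x, y.
  by move=> g gx; rewrite /im !asboolT //; exists x.
apply: (@continuous_at_locally_constant (Ipp X) bool _ f (w2 y)) => //.
  by apply: open_subbase; right; right; exists y.
by move=> g gy; rewrite /im !asboolF.
Qed.

Lemma ev_continuous_at (x : X) (f : Ipp X) : D x f ->
  {for f, continuous (ev x : Ipp X -> discrete_topology X)}.
Proof.
rewrite /D /=; case fx: (pfun f x) => [y|] // _.
apply: (@continuous_at_locally_constant _ (discrete_topology X) _ f (v x y)).
- by apply: open_subbase; left; exists x, y.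
- by [].
- by move=> g gx; rewrite /ev gx fx.
Qed.

End StructureMaps.

Section Inversion.
Variable X : choiceType.

Lemma pinj_ext (f g : pinj X) : pfun f = pfun g -> f = g.
Proof. by case: f g => [f fi] [g gi] /= efg; subst g; congr PInj. Qed.

Definition pinv_fun (f : pinj X) (y : X) : option X :=
  if pselect (exists x, pfun f x = Some y) is left ex then Some (projT1 (cid ex))
  else None.

Lemma pinv_funP (f : pinj X) (x y : X) :
  pinv_fun f y = Some x <-> pfun f x = Some y.
Proof.
rewrite /pinv_fun; case: pselect => [ex|nex]; last first.
  by split => // fx; case: nex; exists x.
case: (cid ex) => z fz /=; split => [[<-] //|fx].
by congr Some; exact: pfun_inj fz fx.
Qed.

Lemma pinv_inj (f : pinj X) (y1 y2 x : X) :
  pinv_fun f y1 = Some x -> pinv_fun f y2 = Some x -> y1 = y2.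
Proof. by move=> /pinv_funP fx /pinv_funP; rewrite fx => -[]. Qed.

Definition pinv (f : pinj X) : pinj X := PInj (@pinv_inj f).

Lemma pinvK : involutive pinv.
Proof.
move=> f; apply: pinj_ext; apply/funext => x /=.
case fx: (pfun f x) => [y|]; first by apply/pinv_funP/pinv_funP.
by case ix: (pinv_fun _ x) => [y|] //; move/pinv_funP/pinv_funP: ix; rewrite fx.
Qed.

Lemma dom_pinv (f : pinj X) : dom (pinv f) = im f.
Proof.
apply/funext => y; rewrite /dom /im /=.
case iy: (pinv_fun f y) => [x|] /=.
  by apply/esym/asboolT; exists x; exact/pinv_funP.
by apply/esym/asboolF => -[x /pinv_funP]; rewrite iy.
Qed.

Lemma im_pinv (f : pinj X) : im (pinv f) = dom f.
Proof. by rewrite -[in RHS](pinvK f) dom_pinv. Qed.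

(* Inversion permutes the subbasic sets, hence is a homeomorphism of tau_pp. *)
Lemma pinv_continuous : continuous (pinv : Ipp X -> Ipp X).
Proof.
apply: continuous_to_Ipp => _ [[x [y ->]]|[[x ->]|[y ->]]]; apply: open_subbase.
- by left; exists y, x; apply/seteqP; split => f /= /pinv_funP.
- right; right; exists x; apply/seteqP; split => f /=; rewrite /w1 /w2 /=.
    by case fx: (pinv_fun f x) => [y|] // _ [y' /pinv_funP]; rewrite fx.
  by case fx: (pinv_fun f x) => [y|] // nx; case: nx; exists y; exact/pinv_funP.
- right; left; exists y; apply/seteqP; split => f /=; rewrite /w1 /w2 /=.
    move=> ny; case fy: (pfun f y) => [x|] //.
    by case: ny; exists x; exact/pinv_funP.
  by move=> fy [x /pinv_funP]; rewrite fy.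
Qed.

End Inversion.

Section Extension.
Variable X : choiceType.

Lemma injective_seq_avoiding (T : seq X) : infinite_set [set: X] ->
  exists e : nat -> X, injective e /\ forall n, e n \notin T.
Proof.
move=> Xinf; have /infiniteP/card_leP[e] := infinite_setD Xinf (finite_seq T).
exists (fun n => val (e (SigSub (mem_set (I : [set: nat] n))))); split.
  move=> m n /val_inj /(@inj _ _ _ e).
  by move=> /(_ (mem_set I) (mem_set I)) /(congr1 val).
move=> n; set en := e _.
by have /set_mem[_ /negP] := valP en.
Qed.

(* Hilbert's hotel: an infinite set injects into itself avoiding any finite
   set T, by sending the k-th element of T to e (2k+1), e n to e (2n), and
   fixing everything else. *)
Lemma injection_avoiding (T : seq X) : infinite_set [set: X] ->
  exists h : X -> X, injective h /\ forall z, h z \notin T.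
Proof.
move=> /(injective_seq_avoiding T) [e [e_inj eT]].
pose rank z := if pselect (exists n, e n == z) is left ex then xchoose ex else 0.
have rankK n : rank (e n) = n.
  rewrite /rank; case: pselect => [ex|[]]; last by exists n.
  by apply: e_inj; apply/eqP/(xchooseP ex).
pose coded z := (z \in T) || `[< exists n, e n = z >].
pose code z := if z \in T then (index z T).*2.+1 else (rank z).*2.
have codeK z1 z2 : coded z1 -> coded z2 -> code z1 = code z2 -> z1 = z2.
  rewrite /coded /code => /orP[z1T|/asboolP[n1 <-]] /orP[z2T|/asboolP[n2 <-]];
    rewrite ?z1T ?z2T ?(negbTE (eT _)) ?rankK.
  - by move=> [/(congr1 half)]; rewrite !doubleK => /(congr1 (nth z1 T));
      rewrite !nth_index.
  - by move/(congr1 odd); rewrite /= !odd_double.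
  - by move/(congr1 odd); rewrite /= !odd_double.
  - by move/(congr1 half); rewrite !doubleK => ->.
exists (fun z => if coded z then e (code z) else z); split; last first.
  by move=> z; case: ifP => [_|/norP[]//]; exact: eT.
move=> z1 z2; case: ifP => c1; case: ifP => c2.
- by move/e_inj; exact: codeK.
- by move=> ez; move/negbT/norP: c2 => [_ /asboolPn[]]; exists (code z1).
- by move=> ez; move/negbT/norP: c1 => [_ /asboolPn[]]; exists (code z2).
- by [].
Qed.

Section Fill.
Variables (P : seq (X * X)) (As Bs : seq X) (f : pinj X) (A : X -> bool).
Variable h : X -> X.
Hypotheses (h_inj : injective h)
  (h_avoid : forall z, h z \notin map snd P ++ Bs).
Hypotheses (fB : basic P As Bs f)
  (A_dom : forall x, x \in map fst P ++ As -> A x = dom f x).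

Lemma basic_fst (x : X) :
  x \in map fst P -> exists2 z, pfun f x = Some z & z \in map snd P.
Proof.
case: fB => fP _ _ /mapP[p pP ->]; exists p.2; first exact: fP.
exact: map_f.
Qed.

Definition fill_fun (x : X) : option X :=
  if A x then (if x \in map fst P then pfun f x else Some (h x)) else None.

Lemma fill_inj (x1 x2 z : X) :
  fill_fun x1 = Some z -> fill_fun x2 = Some z -> x1 = x2.
Proof.
have new_fresh x x' : x' \in map fst P -> pfun f x' = Some (h x) -> False.
  move=> /basic_fst[z' -> z'P] [z'h]; have := h_avoid x.
  by rewrite mem_cat -z'h z'P.
rewrite /fill_fun; case: (A x1) => //; case: (A x2) => //.
case: ifP => P1; case: ifP => P2.
- exact: pfun_inj.
- by move=> fx1 [hz]; case: (new_fresh x2 x1 P1); rewrite fx1 hz.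
- by move=> [hz] fx2; case: (new_fresh x1 x2 P2); rewrite fx2 hz.
- by move=> [<-] [] /h_inj.
Qed.

Definition fill : pinj X := PInj fill_inj.

Lemma basic_fill : basic P As Bs fill.
Proof.
case: (fB) => fP fA fB'; split => [p pP|a aA|b bB x] /=; rewrite /fill_fun.
- have p1 : p.1 \in map fst P by exact: map_f.
  by rewrite A_dom ?mem_cat ?p1 // /dom fP.
- by rewrite A_dom ?mem_cat ?aA ?orbT // /dom fA.
- case: (A x) => //; case: ifP => _; first exact: fB'.
  by move=> [hb]; have := h_avoid x; rewrite mem_cat hb bB orbT.
Qed.

Lemma dom_fill : dom fill = A.
Proof.
apply/funext => x; rewrite /dom /= /fill_fun; case: (A x) => //.
by case: ifP => // /basic_fst[z -> _].
Qed.

End Fill.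

End Extension.

Section OpenMaps.
Variable X : choiceType.

(* The image under dom of a basic neighbourhood of f is a neighbourhood of
   dom f: on finite X the point dom f is itself open, while on infinite X
   every subset prescribed at the constrained points is the domain of a
   filling of f inside the basic set. *)
Lemma dom_basic_nbhs (P : seq (X * X)) (As Bs : seq X) (f : pinj X) :
  basic P As Bs f -> nbhs (dom f) (@dom X @` basic P As Bs).
Proof.
move=> fB; have [/finite_fsetP[F XF]|Xinf] := pselect (finite_set [set: X]).
  apply: filterS (nbhs_cylinder (dom f) F) => A AF; exists f => //.
  by apply/funext => x; apply/esym/AF; have : [set: X] x by []; rewrite XF.
have [h [h_inj h_avoid]] := injection_avoiding (map snd P ++ Bs) Xinf.
apply: filterS (nbhs_cylinder (dom f) (map fst P ++ As)) => A A_dom.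
by exists (fill A h_inj h_avoid fB); [exact: basic_fill|exact: dom_fill].
Qed.

Lemma dom_open (U : set (Ipp X)) : open U -> open (@dom X @` U).
Proof.
move=> oU; rewrite openE => _ [f Uf <-].
have [P [As [Bs [fB BU]]]] := open_basic_nbhs oU Uf.
by apply: filterS (dom_basic_nbhs fB); exact: image_subset.
Qed.

(* im = dom o pinv and pinv is a continuous involution. *)
Lemma im_open (U : set (Ipp X)) : open U -> open (@im X @` U).
Proof.
move=> oU; have -> : @im X @` U = @dom X @` (@pinv X @^-1` U).
  apply/seteqP; split => _ [f Uf <-]; exists (pinv f).
  - by rewrite /= pinvK.
  - exact: dom_pinv.
  - exact: Uf.
  - exact: im_pinv.
apply: dom_open; exact: (proj1 (continuousP _) (@pinv_continuous X)).
Qed.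

End OpenMaps.

Section Idempotents.
Variable X : choiceType.

Definition idem (g : {ptws X -> bool}) : Ipp X := idA [set x | g x].

Lemma idem_continuous : continuous idem.
Proof.
apply: continuous_to_Ipp => _ [[x [y ->]]|[[x ->]|[y ->]]].
- have [<-|nxy] := eqVneq x y.
    rewrite (_ : _ @^-1` _ = [set g | g x = true]); first exact: open_coord.
    by apply/seteqP; split => g; rewrite /v /idem /= asboolb; case: (g x).
  rewrite (_ : _ @^-1` _ = set0); first exact: open0.
  apply/seteqP; split => g //; rewrite /v /idem /= asboolb.
  by case: (g x) => // -[exy]; rewrite exy eqxx in nxy.
- rewrite (_ : _ @^-1` _ = [set g | g x = false]); first exact: open_coord.
  by apply/seteqP; split => g; rewrite /w1 /idem /= asboolb; case: (g x).
- rewrite (_ : _ @^-1` _ = [set g | g y = false]); first exact: open_coord.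
  apply/seteqP; split => g; rewrite /w2 /idem /=.
    move=> ny; apply/negbTE/negP => gy.
    by apply: ny; exists y; rewrite asboolb gy.
  move=> gy [z]; rewrite asboolb; case gz: (g z) => // -[zy].
  by rewrite -zy gz in gy.
Qed.

(* The idempotents form the continuous image of the compact space 2^X. *)
Lemma compact_idempotents :
  compact (range (fun A : set X => (idA A : Ipp X))).
Proof.
have -> : range (fun A : set X => (idA A : Ipp X)) = idem @` setT.
  apply/seteqP; split => _ [A _ <-]; last by exists [set x | A x].
  exists (fun x => `[< A x >]) => //; rewrite /idem; congr idA.
  by apply/seteqP; split => z /= /asboolP.
apply: continuous_compact; last exact: compact_ptws.
exact/continuous_subspaceT/idem_continuous.
Qed.

End Idempotents.

Section UniversalProperty.
Variable X : choiceType.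

(* ev_x is continuous on the subspace D_x: the preimage of any V is the trace
   on D_x of the open set \bigcup_(y in V) v x y. *)
Lemma ev_trace_open (x : X) (V : set X) :
  exists U : set (Ipp X), open U /\ U `&` D x = D x `&` ev x @^-1` V.
Proof.
exists (\bigcup_(y in V) v x y); split.
  by apply: bigcup_open => y _; apply: open_subbase; left; exists x, y.
apply/seteqP; split => f.
  by move=> [[y Vy fxy] Dxf]; split => //; rewrite /ev /= fxy.
rewrite /D /ev /= => -[Dxf]; case fx: (pfun f x) Dxf => [y|] // _ /= Vy.
by split; [exists y|].
Qed.

Lemma subbase_in_structure_topology (O : set_system (pinj X)) :
  is_topology O -> pp_maps_continuous O -> @subbase_pp X `<=` O.
Proof.
move=> [_ OI _] [Odom Oim Oev] _ [[x [y ->]]|[[x ->]|[y ->]]].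
- have [U [OU UD]] := Oev x [set y] (discrete_open _).
  rewrite v_evE -UD; apply: OI OU _.
  by rewrite D_domE; apply: Odom; exact: open_coord.
- by rewrite w1_domE; apply: Odom; exact: open_coord.
- by rewrite w2_imE; apply: Oim; exact: open_coord.
Qed.

Lemma continuous_to_IppP (Y : topologicalType) (phi : Y -> Ipp X) :
  continuous phi <->
  [/\ continuous (dom (X:=X) \o phi), continuous (im (X:=X) \o phi) &
      forall x : X, {within phi @^-1` D x,
        continuous ((ev x : pinj X -> discrete_topology X) \o phi)}].
Proof.
split=> [phiC|[domC imC evC]].
  split=> [y|y|x].
  - by apply: continuous_comp; [exact: phiC|exact: dom_continuous].
  - by apply: continuous_comp; [exact: phiC|exact: im_continuous].
  - apply: continuous_in_subspaceT => y /set_mem Dxy.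
    by apply: continuous_comp; [exact: phiC|exact: ev_continuous_at].
have open_pre (k : Ipp X -> {ptws X -> bool}) V :
    continuous (k \o phi) -> open V -> open (phi @^-1` (k @^-1` V)).
  by move=> /continuousP kC /kC.
apply: continuous_to_Ipp => _ [[x [y ->]]|[[x ->]|[y ->]]].
- have oD : open (phi @^-1` D x).
    by rewrite D_domE; apply: open_pre domC (open_coord _ _).
  have evC' := evC x; rewrite continuous_open_subspace // in evC'.
  have := proj1 (continuous_inP _ oD) evC' [set y] (discrete_open _).
  by rewrite v_evE preimage_setI.
- by rewrite w1_domE; apply: open_pre domC (open_coord _ _).
- by rewrite w2_imE; apply: open_pre imC (open_coord _ _).
Qed.

End UniversalProperty.

Theorem theorem3p8 (X : choiceType) :
  (* (i) tau_pp is the smallest topology making dom, im, ev_x continuous *)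
  (pp_maps_continuous (@open (Ipp X)) /\
   forall O : set_system (pinj X), is_topology O -> pp_maps_continuous O ->
     forall U : set (pinj X), @open (Ipp X) U -> O U) /\
  (* (ii) dom and im are open maps *)
  (forall U : set (Ipp X), open U ->
     open (dom (X:=X) @` U) /\ open (im (X:=X) @` U)) /\
  (* (iii) universal property *)
  (forall (Y : topologicalType) (phi : Y -> Ipp X),
     continuous phi <->
     [/\ continuous (dom (X:=X) \o phi),
         continuous (im (X:=X) \o phi) &
         forall x : X, {within phi @^-1` D x,
            continuous ((ev x : pinj X -> discrete_topology X) \o phi)}]) /\
  (* (iv) the idempotents 1_A are compact *)
  compact (range (fun A : set X => (idA A : Ipp X))).
Proof.
split; [split|split; [|split]].
- split => [V|V|x V _]; last exact: ev_trace_open.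
    by move=> /(proj1 (continuousP _) (@dom_continuous X)).
  by move=> /(proj1 (continuousP _) (@im_continuous X)).
- move=> O Otop Ocont.
  exact: open_Ipp_min Otop (subbase_in_structure_topology Otop Ocont).
- by move=> U oU; split; [exact: dom_open|exact: im_open].
- exact: continuous_to_IppP.
- exact: compact_idempotents.
Qed.
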